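(* Fix any vector of nodal storage capacities $Q^{\rm s}=(Q^{\rm s}_1,\dots,Q^{\rm s}_I)\ge 0$ and consider the lower-level stochastic Cournot game described in the context. At any Nash equilibrium of this game, for every node $i$, every time $t\in\{1,\dots,N_{\rm T}\}$ and every scenario $w\in\{1,\dots,N_{\rm w}\}$, the charge level $q^{\rm ch}_{itw}$ and discharge level $q^{\rm dis}_{itw}$ of the storage firm at node $i$ are not simultaneously positive; i.e. each storage firm is either in charge mode or in discharge mode (or idle).
   Context: Market model. There are $I$ nodes, time periods $t\in\{1,\dots,N_{\rm T}\}$ of length $\Delta>0$, and wind scenarios $w\in\{1,\dots,N_{\rm w}\}$ with probabilities $\Psi_w>0$. Node $i$ hosts a set $\mathcal N^{\rm cg}_i$ of classical generators, a set $\mathcal N^{\rm wg}_i$ of wind generators and one storage firm; $\mathcal N_i$ is the set of neighbouring nodes of $i$, and each pair of neighbouring nodes $i,j$ is linked by a transmission firm. The price at node $i$, time $t$, scenario $w$ is $P_{itw}=\alpha_{it}\exp\!\big(-\beta_{it}\big(q^{\rm s}_{itw}+\sum_{m\in\mathcal N^{\rm wg}_i}q^{\rm wg}_{mitw}+\sum_{n\in\mathcal N^{\rm cg}_i}q^{\rm cg}_{nitw}+\sum_{j\in\mathcal N_i}q^{\rm tr}_{ijtw}\big)\big)$ with $\alpha_{it},\beta_{it}>0$. Firms (each chooses its variables for all $t,w$ simultaneously): (1) Wind generator $m$ at node $i$: maximizes $\sum_w\Psi_w\sum_t P_{itw}q^{\rm wg}_{mitw}$ subject to $0\le q^{\rm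 wg}_{mitw}\le Q^{\rm wg}_{mitw}$ (given available wind capacities). (2) Storage firm at node $i$: chooses $q^{\rm dis}_{itw},q^{\rm ch}_{itw}\ge0$ and $q^{\rm s}_{itw}$ to maximize $\sum_w\Psi_w\sum_t\big[P_{itw}q^{\rm s}_{itw}-c^{\rm s}_i(q^{\rm dis}_{itw}+q^{\rm ch}_{itw})-\gamma^{\rm s}_i\big(P_{itw}q^{\rm s}_{itw}+P_{itw}/\beta_{it}\big)\big]$ subject to, for all $t,w$: $q^{\rm s}_{itw}=\eta^{\rm dis}_i q^{\rm dis}_{itw}-q^{\rm ch}_{itw}/\eta^{\rm ch}_i$; $q^{\rm dis}_{itw}\le\zeta^{\rm dis}_iQ^{\rm s}_i$; $q^{\rm ch}_{itw}\le\zeta^{\rm ch}_iQ^{\rm s}_i$; $0\le\sum_{k=1}^t(q^{\rm ch}_{ikw}-q^{\rm dis}_{ikw})\Delta\le Q^{\rm s}_i$. Here $c^{\rm s}_i>0$ is the unit operation cost, $\eta^{\rm ch}_i,\eta^{\rm dis}_i\in(0,1]$ are charging/discharging efficiencies, $\zeta^{\rm ch}_i,\zeta^{\rm dis}_i>0$, and $\gamma^{\rm s}_i\in\{0,1\}$ ($0$: strategic, $1$: regulated). (3) Classical generator $n$ at node $i$: maximizes $\sum_w\Psi_w\sum_t(P_{itw}-c^{\rm cg}_{ni})q^{\rm cg}_{nitw}$ subject to $0\le q^{\rm cg}_{nitw}\le Q^{\rm cg}_{ni}$, $q^{\rm cg}_{nitw}-q^{\rm cg}_{ni(t-1)w}\le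 R^{\rm up}_{ni}$, $q^{\rm cg}_{ni(t-1)w}-q^{\rm cg}_{nitw}\le R^{\rm dn}_{ni}$. (4) Transmission firm between neighbouring nodes $i,j$: chooses $q^{\rm tr}_{ijtw},q^{\rm tr}_{jitw}$ to maximize $\sum_w\Psi_w\sum_t\big[(1-\gamma^{\rm tr}_{ij})(P_{jtw}q^{\rm tr}_{jitw}+P_{itw}q^{\rm tr}_{ijtw})+\gamma^{\rm tr}_{ij}(-P_{jtw}/\beta_{jt}-P_{itw}/\beta_{it})\big]$ subject to $q^{\rm tr}_{ijtw}=-q^{\rm tr}_{jitw}$ and $-Q^{\rm tr}_{ij}\le q^{\rm tr}_{ijtw}\le Q^{\rm tr}_{ij}$, with $\gamma^{\rm tr}_{ij}\in\{0,1\}$. A Nash equilibrium is a profile of all firms' strategies in which each firm's strategy is optimal for its problem given the other firms' strategies. *)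

From HB Require Import structures.
From mathcomp Require Import all_boot all_order all_algebra.
From mathcomp Require Import reals sequences exp.
Set Implicit Arguments. Unset Strict Implicit. Unset Printing Implicit Defensive.
Import Order.TTheory GRing.Theory Num.Theory.
Local Open Scope ring_scope.

(* Nodes are 'I_I, time periods 'I_NT (period t+1 of the paper
   is index t here), scenarios 'I_NW.  Wind generators are indexed globally by
   'I_NWG with location locW (so N^wg_i = {m | locW m = i}); similarly the
   classical generators 'I_NCG with location locC.  Neighbourhood is the
   relation adj (N_i = {j | adj i j}). *)
Record market (R : realType) (I NT NW NWG NCG : nat) := Market {
  Delta : R;
  Psi : 'I_NW -> R;
  alpha : 'I_I -> 'I_NT -> R;
  beta : 'I_I -> 'I_NT -> R;
  adj : 'I_I -> 'I_I -> bool;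
  locW : 'I_NWG -> 'I_I;
  locC : 'I_NCG -> 'I_I;
  Qwg : 'I_NWG -> 'I_NT -> 'I_NW -> R;     (* available wind capacity *)
  ccg : 'I_NCG -> R;
  Qcg : 'I_NCG -> R;
  Rup : 'I_NCG -> R;
  Rdn : 'I_NCG -> R;
  cs : 'I_I -> R;
  eta_ch : 'I_I -> R;
  eta_dis : 'I_I -> R;
  zeta_ch : 'I_I -> R;
  zeta_dis : 'I_I -> R;
  gamma_s : 'I_I -> bool;                  (* false = 0 strategic, true = 1 regulated *)
  gamma_tr : 'I_I -> 'I_I -> bool;
  Qtr : 'I_I -> 'I_I -> R
}.

Definition market_wf (R : realType) I NT NW NWG NCG
    (M : market R I NT NW NWG NCG) : Prop :=
  [/\ 0 < Delta M /\ (forall w, 0 < Psi M w) /\ \sum_(w < NW) Psi M w = 1,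
      (forall i t, 0 < alpha M i t /\ 0 < beta M i t),
      (forall i j, adj M i j = adj M j i) /\ (forall i, ~~ adj M i i),
      (forall i j, gamma_tr M i j = gamma_tr M j i /\ Qtr M i j = Qtr M j i)
    & forall i, [/\ 0 < cs M i, 0 < eta_ch M i <= 1, 0 < eta_dis M i <= 1,
                    0 < zeta_ch M i & 0 < zeta_dis M i] ].

Record profile (R : realType) (I NT NW NWG NCG : nat) := Profile {
  qwg : 'I_NWG -> 'I_NT -> 'I_NW -> R;
  qcg : 'I_NCG -> 'I_NT -> 'I_NW -> R;
  qdis : 'I_I -> 'I_NT -> 'I_NW -> R;
  qch : 'I_I -> 'I_NT -> 'I_NW -> R;
  qs : 'I_I -> 'I_NT -> 'I_NW -> R;
  qtr : 'I_I -> 'I_I -> 'I_NT -> 'I_NW -> R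
}.

Section Game.
Variables (R : realType) (I NT NW NWG NCG : nat).
Variable M : market R I NT NW NWG NCG.
Variable Qs : 'I_I -> R.
Local Notation profile := (profile R I NT NW NWG NCG).

Definition price (p : profile) (i : 'I_I) (t : 'I_NT) (w : 'I_NW) : R :=
  alpha M i t * expR (- (beta M i t * (qs p i t w
      + \sum_(m < NWG | locW M m == i) qwg p m t w
      + \sum_(n < NCG | locC M n == i) qcg p n t w
      + \sum_(j < I | adj M i j) qtr p i j t w))).

Definition expect (f : 'I_NT -> 'I_NW -> R) : R :=
  \sum_(w < NW) Psi M w * \sum_(t < NT) f t w.

Definition wind_obj (p : profile) (m : 'I_NWG) : R :=
  expect (fun t w => price p (locW M m) t w * qwg p m t w).
Definition wind_feas (m : 'I_NWG) (x : 'I_NT -> 'I_NW -> R) : Prop :=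
  forall t w, 0 <= x t w <= Qwg M m t w.
Definition set_wind (p : profile) (m : 'I_NWG) x : profile :=
  Profile (fun m' => if m' == m then x else qwg p m') (qcg p) (qdis p)
          (qch p) (qs p) (qtr p).

Definition storage_obj (p : profile) (i : 'I_I) : R :=
  let g := (gamma_s M i)%:R in
  expect (fun t w => price p i t w * qs p i t w
      - cs M i * (qdis p i t w + qch p i t w)
      - g * (price p i t w * qs p i t w + price p i t w / beta M i t)).
Definition storage_feas (i : 'I_I) (dis ch s : 'I_NT -> 'I_NW -> R) : Prop :=
  forall t w,
  [/\ 0 <= dis t w /\ 0 <= ch t w,
      s t w = eta_dis M i * dis t w - ch t w / eta_ch M i,
      dis t w <= zeta_dis M i * Qs i,
      ch t w <= zeta_ch M i * Qs i
    & 0 <= (\sum_(k < NT | (k <= t)%N) (ch k w - dis k w)) * Delta M <= Qs i].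
Definition set_storage (p : profile) (i : 'I_I) dis ch s : profile :=
  Profile (qwg p) (qcg p)
    (fun i' => if i' == i then dis else qdis p i')
    (fun i' => if i' == i then ch else qch p i')
    (fun i' => if i' == i then s else qs p i') (qtr p).

Definition cg_obj (p : profile) (n : 'I_NCG) : R :=
  expect (fun t w => (price p (locC M n) t w - ccg M n) * qcg p n t w).
Definition cg_feas (n : 'I_NCG) (x : 'I_NT -> 'I_NW -> R) : Prop :=
  (forall t w, 0 <= x t w <= Qcg M n) /\
  (forall (t t' : 'I_NT) w, t = t'.+1 :> nat ->
     x t w - x t' w <= Rup M n /\ x t' w - x t w <= Rdn M n).
Definition set_cg (p : profile) (n : 'I_NCG) x : profile :=
  Profile (qwg p) (fun n' => if n' == n then x else qcg p n') (qdis p)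
          (qch p) (qs p) (qtr p).

Definition tr_obj (p : profile) (i j : 'I_I) : R :=
  let g := (gamma_tr M i j)%:R in
  expect (fun t w =>
    (1 - g) * (price p j t w * qtr p j i t w + price p i t w * qtr p i j t w)
    + g * (- (price p j t w / beta M j t) - price p i t w / beta M i t)).
Definition tr_feas (i j : 'I_I) (xij xji : 'I_NT -> 'I_NW -> R) : Prop :=
  forall t w, xij t w = - xji t w /\ - Qtr M i j <= xij t w <= Qtr M i j.
Definition set_tr (p : profile) (i j : 'I_I) xij xji : profile :=
  Profile (qwg p) (qcg p) (qdis p) (qch p) (qs p)
    (fun a b => if (a == i) && (b == j) then xij
                else if (a == j) && (b == i) then xji else qtr p a b).

Definition nash_equilibrium (p : profile) : Prop :=
  [/\ forall m, wind_feas m (qwg p m) /\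
        (forall x, wind_feas m x -> wind_obj (set_wind p m x) m <= wind_obj p m),
      forall i, storage_feas i (qdis p i) (qch p i) (qs p i) /\
        (forall dis ch s, storage_feas i dis ch s ->
           storage_obj (set_storage p i dis ch s) i <= storage_obj p i),
      forall n, cg_feas n (qcg p n) /\
        (forall x, cg_feas n x -> cg_obj (set_cg p n x) n <= cg_obj p n)
    & forall i j, adj M i j ->
        tr_feas i j (qtr p i j) (qtr p j i) /\
        (forall xij xji, tr_feas i j xij xji ->
           tr_obj (set_tr p i j xij xji) i j <= tr_obj p i j) ].

End Game.

From mathcomp Require Import all_boot all_order all_algebra.
From mathcomp Require Import reals sequences exp.
From mathcomp Require Import ring lra.
Import Order.TTheory GRing.Theory Num.Theory.
Set Implicit Arguments.
Unset Strict Implicit.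
Unset Printing Implicit Defensive.
Local Open Scope ring_scope.

(* Suppose the storage firm at node [i] both charges and discharges at [(t, w)].
   Discharging [b] less and charging [ed ec b] less at [t] keeps its sale at [t]
   and saves operating cost, but leaves [(1 - ed ec) b] more energy in store
   after [t].  Let [k <= t] be the period from which the stored level stays
   positive up to [t]; charging [(1 - ed ec) b] less at [k] removes the surplus,
   keeps all levels feasible for small [b], and raises the sale at [k] to a value
   that is still nonpositive, since the level before [k] is nonpositive and so
   the firm is a net buyer at [k].  On nonpositive sales the revenue [P z * z]
   of a strategic firm and [- P z / beta] of a regulated one are nondecreasing
   in [z], so the deviation is strictly profitable. *)

Lemma ltr_sum_le_lt (R : numDomainType) (T : finType) (F G : T -> R) (a : T) :
  (forall j, F j <= G j) -> F a < G a -> \sum_j F j < \sum_j G j.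
Proof.
move=> leFG ltFGa; rewrite (bigD1 a) //= [X in _ < X](bigD1 a) //=.
by apply: ltr_leD => //; apply: ler_sum => j _.
Qed.

Lemma last_nonpos_run (R : realDomainType) (a : nat -> R) (t : nat) :
  a 0%N <= 0 ->
  exists2 k, (k <= t)%N &
    a k <= 0 /\ exists2 e, 0 < e & forall n, (k < n <= t)%N -> e <= a n.
Proof.
move=> a0; elim: t => [|t [k kt [ak [e e0 he]]]].
  by exists 0%N => //; split=> //; exists 1 => // n /andP[/leq_trans h/h].
have [at1|at1] := leP (a t.+1) 0.
  by exists t.+1 => //; split=> //; exists 1 => // n /andP[/leq_trans h/h]; rewrite ltnn.
exists k; first exact: leqW.
split=> //; exists (Num.min e (a t.+1)); first by rewrite lt_min e0.
move=> n /andP[kn]; rewrite leq_eqVlt ltnS => /orP[/eqP->|nt].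
  by rewrite ge_min lexx orbT.
by rewrite ge_min he ?kn.
Qed.

Definition storage_revenue (R : realType) (al be A : R) (g : bool) (s : R) : R :=
  let P := al * expR (- (be * (s + A))) in P * s - g%:R * (P * s + P / be).

Lemma storage_revenue_le (R : realType) (al be A : R) (g : bool) (s s' : R) :
  0 < al -> 0 < be -> s <= s' -> s' <= 0 ->
  storage_revenue al be A g s <= storage_revenue al be A g s'.
Proof.
move=> al0 be0 ss' s'0; rewrite /storage_revenue.
set P := fun z => al * expR (- (be * (z + A))).
have P'0 : 0 < P s' by rewrite mulr_gt0 ?expR_gt0.
have PP' : P s' <= P s by rewrite ler_pM2l // ler_expR lerN2 ler_pM2l // lerD2r.
case: g; rewrite /= ?mul1r ?mul0r ?subr0.
  rewrite !opprD !addrA !subrr !add0r lerN2.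
  by rewrite ler_wpM2r // invr_ge0 ltW.
apply: (@le_trans _ _ (P s' * s)); first by rewrite ler_wnM2r // (le_trans ss').
by rewrite ler_pM2l.
Qed.

Definition pulse (R : nmodType) (T W : eqType) (t : T) (w : W) (x : R) t0 w0 : R :=
  if (t0 == t) && (w0 == w) then x else 0.

Definition stock (R : nmodType) (NT : nat) (x : 'I_NT -> R) (n : nat) : R :=
  \sum_(m < NT | (m < n)%N) x m.

Lemma stock0 (R : nmodType) (NT : nat) (x : 'I_NT -> R) : stock x 0 = 0.
Proof. by rewrite /stock big_pred0. Qed.

Lemma stockS (R : nmodType) (NT : nat) (x : 'I_NT -> R) (n : 'I_NT) :
  stock x n.+1 = stock x n + x n.
Proof.
rewrite /stock (bigD1 n) //= addrC; congr (_ + _); apply: eq_bigl => m.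
by rewrite ltnS ltn_neqAle andbC.
Qed.

Lemma stock_pulse (R : nmodType) (NT : nat) (W : eqType) (t : 'I_NT) (w w0 : W)
    (x : R) (n : nat) :
  stock (fun m => pulse t w x m w0) n = if (t < n)%N && (w0 == w) then x else 0.
Proof.
rewrite /stock /pulse; case: (boolP ((t < n)%N && (w0 == w))) => [/andP[tn ->]|].
  rewrite (bigD1 t) //= eqxx big1 ?addr0 // => m /andP[_ /negbTE->] //.
rewrite negb_and => /orP[tn|/negbTE->]; last by rewrite big1 // => m; rewrite andbF.
by rewrite big1 // => m mn; case: eqP => // mt; rewrite -mt mn in tn.
Qed.

Section StorageFirm.
Variables (R : realType) (I NT NW NWG NCG : nat).
Variables (M : market R I NT NW NWG NCG) (Qs : 'I_I -> R) (i : 'I_I).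
Local Notation profile := (profile R I NT NW NWG NCG).

Definition residual_supply (p : profile) (t : 'I_NT) (w : 'I_NW) : R :=
  \sum_(m < NWG | locW M m == i) qwg p m t w
  + \sum_(n < NCG | locC M n == i) qcg p n t w
  + \sum_(j < I | adj M i j) qtr p i j t w.

Definition storage_value (p : profile) (dis ch s : 'I_NT -> 'I_NW -> R) : R :=
  expect M (fun t w =>
    storage_revenue (alpha M i t) (beta M i t) (residual_supply p t w)
      (gamma_s M i) (s t w) - cs M i * (dis t w + ch t w)).

Lemma storage_obj_set_storage (p : profile) dis ch s :
  storage_obj M (set_storage p i dis ch s) i = storage_value p dis ch s.
Proof.
apply: eq_bigr => w _; congr (_ * _); apply: eq_bigr => t _.
rewrite /price /storage_revenue /residual_supply /= !eqxx -!addrA; ring.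
Qed.

Lemma storage_obj_value (p : profile) :
  storage_obj M p i = storage_value p (qdis p i) (qch p i) (qs p i).
Proof.
apply: eq_bigr => w _; congr (_ * _); apply: eq_bigr => t _.
rewrite /price /storage_revenue /residual_supply -!addrA; ring.
Qed.

Lemma storage_value_lt (p : profile) (dis ch s dis' ch' s' : 'I_NT -> 'I_NW -> R)
    (t : 'I_NT) (w : 'I_NW) :
  (forall w, 0 < Psi M w) -> (forall t, 0 < alpha M i t /\ 0 < beta M i t) ->
  0 < cs M i ->
  (forall t w, s t w = s' t w \/ s t w <= s' t w <= 0) ->
  (forall t w, dis' t w <= dis t w) -> (forall t w, ch' t w <= ch t w) ->
  ch' t w < ch t w ->
  storage_value p dis ch s < storage_value p dis' ch' s'.
Proof.
move=> Psi0 ab0 cs0 hs hdis hch hcht.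
have hcost t0 w0 : cs M i * (dis' t0 w0 + ch' t0 w0) <= cs M i * (dis t0 w0 + ch t0 w0).
  by apply: ler_wpM2l; [exact: ltW | apply: lerD].
pose rev t0 w0 := storage_revenue (alpha M i t0) (beta M i t0)
  (residual_supply p t0 w0) (gamma_s M i).
have hrev t0 w0 : rev t0 w0 (s t0 w0) <= rev t0 w0 (s' t0 w0).
  have [a0 b0] := ab0 t0.
  by case: (hs t0 w0) => [->//|/andP[ss' s'0]]; apply: storage_revenue_le.
have hcostt : cs M i * (dis' t w + ch' t w) < cs M i * (dis t w + ch t w).
  by rewrite ltr_pM2l //; apply: ler_ltD.
apply: (ltr_sum_le_lt (a := w)) => [w0|].
  apply: ler_wpM2l; first exact: ltW.
  by apply: ler_sum => t0 _; exact: lerB (hrev t0 w0) (hcost t0 w0).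
rewrite ltr_pM2l //; apply: (ltr_sum_le_lt (a := t)) => [t0|].
  exact: lerB (hrev t0 w) (hcost t0 w).
exact: ler_ltB (hrev t w) hcostt.
Qed.

Lemma level_stock (x : 'I_NT -> R) (t : 'I_NT) :
  \sum_(m < NT | (m <= t)%N) x m = stock x t.+1.
Proof. by []. Qed.

Hypothesis Delta_gt0 : 0 < Delta M.
Hypothesis eta_dis_range : 0 < eta_dis M i <= 1.
Hypothesis eta_ch_range : 0 < eta_ch M i <= 1.

Local Notation ed := (eta_dis M i).
Local Notation ec := (eta_ch M i).

Lemma round_trip_efficiency : 0 <= ed * ec <= 1.
Proof.
have [/andP[ed0 ed1] /andP[ec0 ec1]] := (eta_dis_range, eta_ch_range).
by apply/andP; split; [apply: mulr_ge0 | apply: mulr_ile1]; rewrite // ltW.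
Qed.

Definition dev_dis (dis : 'I_NT -> 'I_NW -> R) t w b t0 w0 : R :=
  dis t0 w0 - pulse t w b t0 w0.
Definition dev_ch (ch : 'I_NT -> 'I_NW -> R) t k w b t0 w0 : R :=
  ch t0 w0 - pulse t w (ed * ec * b) t0 w0 - pulse k w ((1 - ed * ec) * b) t0 w0.
Definition dev_s (s : 'I_NT -> 'I_NW -> R) k w b t0 w0 : R :=
  s t0 w0 + pulse k w ((1 - ed * ec) * b / ec) t0 w0.

Lemma stock_dev (dis ch : 'I_NT -> 'I_NW -> R) t k w b w0 n :
  stock (fun m => dev_ch ch t k w b m w0 - dev_dis dis t w b m w0) n =
  stock (fun m => ch m w0 - dis m w0) n
  + stock (fun m => pulse t w ((1 - ed * ec) * b) m w0) n
  - stock (fun m => pulse k w ((1 - ed * ec) * b) m w0) n.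
Proof.
rewrite /stock -big_split -sumrB; apply: eq_bigr => m _ /=.
by rewrite /dev_ch /dev_dis /pulse; case: (_ && _); case: (_ && _); ring.
Qed.

Lemma stock_dev_bounds (dis ch : 'I_NT -> 'I_NW -> R) (t k : 'I_NT) w b w0 n :
  (k <= t)%N -> 0 <= (1 - ed * ec) * b ->
  0 <= stock (fun m => ch m w0 - dis m w0) n ->
  (forall n, (k < n <= t)%N -> (1 - ed * ec) * b <= stock (fun m => ch m w - dis m w) n) ->
  0 <= stock (fun m => dev_ch ch t k w b m w0 - dev_dis dis t w b m w0) n
    <= stock (fun m => ch m w0 - dis m w0) n.
Proof.
move=> kt r0 L0 run; rewrite stock_dev !stock_pulse.
case: (w0 =P w) => [ew|_]; last by rewrite !andbF subr0 addr0 L0 lexx.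
subst w0; rewrite !andbT.
case: (ltnP t n) => [tn|nt]; first by rewrite (leq_ltn_trans kt tn) addrK L0 lexx.
case: (ltnP k n) => [kn|_]; last by rewrite subr0 addr0 L0 lexx.
have := run n; rewrite kn nt => /(_ isT) rL.
by apply/andP; split; lra.
Qed.

Lemma storage_feas_dev (dis ch s : 'I_NT -> 'I_NW -> R) (t k : 'I_NT) w b :
  storage_feas M Qs i dis ch s -> (k <= t)%N -> 0 <= b ->
  b <= dis t w -> b <= ch t w -> b <= ch k w ->
  (forall n, (k < n <= t)%N -> (1 - ed * ec) * b <= stock (fun m => ch m w - dis m w) n) ->
  storage_feas M Qs i (dev_dis dis t w b) (dev_ch ch t k w b) (dev_s s k w b).
Proof.
move=> feas kt b0 bdis bch bchk run t0 w0.
have [[dis0 ch0] s_eq dis_le ch_le /andP[lev0 levQ]] := feas t0 w0.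
have /andP[ec0 _] := eta_ch_range.
have /andP[u0 u1] := round_trip_efficiency.
have ub0 : 0 <= ed * ec * b by rewrite mulr_ge0.
have ub : ed * ec * b <= b by rewrite ler_piMl.
rewrite /dev_dis /dev_ch /dev_s /pulse.
split.
- case: (w0 =P w) => [ew|_]; last by rewrite !andbF !subr0.
  subst w0; rewrite !andbT.
  case: (t0 =P t) => [et|_]; last case: (t0 =P k) => [ek|_].
  + subst t0; case: (t =P k) => [tk|_]; last lra.
    by rewrite -tk in bchk; lra.
  + by subst t0; lra.
  + lra.
- rewrite s_eq; case: (_ && _); case: (_ && _); field; lra.
- case: (_ && _); lra.
- case: (_ && _); case: (_ && _); lra.
rewrite level_stock in lev0 levQ *.
have L0 : 0 <= stock (fun m => ch m w0 - dis m w0) t0.+1 by move: lev0; rewrite pmulr_lge0.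
have r0 : 0 <= (1 - ed * ec) * b by lra.
have /andP[lo hi] := stock_dev_bounds kt r0 L0 run.
rewrite mulr_ge0 ?(ltW Delta_gt0) //=.
by apply: le_trans levQ; rewrite ler_pM2r.
Qed.

Lemma dev_s_dominates (dis ch s : 'I_NT -> 'I_NW -> R) (k : 'I_NT) w b :
  storage_feas M Qs i dis ch s -> 0 <= b -> b <= ch k w ->
  stock (fun m => ch m w - dis m w) k <= 0 ->
  forall t0 w0, s t0 w0 = dev_s s k w b t0 w0 \/ s t0 w0 <= dev_s s k w b t0 w0 <= 0.
Proof.
move=> feas b0 bchk levk t0 w0; rewrite /dev_s /pulse.
case: ((t0 == k) && (w0 == w)) /andP => [[/eqP-> /eqP->]|_]; last by left; rewrite addr0.
right; have [_ s_eq _ _ /andP[levk1 _]] := feas k w.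
have /andP[ec0 _] := eta_ch_range.
have /andP[u0 u1] := round_trip_efficiency.
have dis_ch : dis k w <= ch k w.
  move: levk1; rewrite level_stock stockS pmulr_lge0 //; lra.
have mix : ed * ec * dis k w + (1 - ed * ec) * b <= ch k w.
  have h1 : ed * ec * dis k w <= ed * ec * ch k w by rewrite ler_wpM2l.
  have h2 : (1 - ed * ec) * b <= (1 - ed * ec) * ch k w by rewrite ler_wpM2l ?subr_ge0.
  lra.
rewrite lerDl divr_ge0 ?mulr_ge0 ?subr_ge0 ?(ltW ec0) //= s_eq.
have -> : ed * dis k w - ch k w / ec + (1 - ed * ec) * b / ec
        = (ed * ec * dis k w + (1 - ed * ec) * b - ch k w) / ec.
  by field; rewrite lt0r_neq0.
by rewrite pmulr_lle0 ?invr_gt0 // subr_le0.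
Qed.

Lemma storage_improving_deviation (dis ch s : 'I_NT -> 'I_NW -> R) (t : 'I_NT) w :
  storage_feas M Qs i dis ch s -> 0 < dis t w -> 0 < ch t w ->
  exists dis' ch' s', [/\ storage_feas M Qs i dis' ch' s',
    forall t0 w0, s t0 w0 = s' t0 w0 \/ s t0 w0 <= s' t0 w0 <= 0,
    forall t0 w0, dis' t0 w0 <= dis t0 w0,
    forall t0 w0, ch' t0 w0 <= ch t0 w0 &
    ch' t w < ch t w].
Proof.
move=> feas dis_t ch_t.
set a := stock (fun m => ch m w - dis m w).
have a0 : a 0%N <= 0 by rewrite /a stock0.
have [k kt [ak [e e0 run]]] := last_nonpos_run t a0.
pose k' := Ordinal (leq_ltn_trans kt (ltn_ord t)).
pose b := Num.min (Num.min (dis t w) (ch t w)) e.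
have b0 : 0 < b by rewrite !lt_min dis_t ch_t e0.
have b_dis : b <= dis t w by rewrite !ge_min lexx.
have b_ch : b <= ch t w by rewrite !ge_min lexx !orbT.
have b_e : b <= e by rewrite !ge_min lexx !orbT.
have b_chk : b <= ch k' w.
  move: (kt); rewrite leq_eqVlt => /orP[/eqP ekt|lkt].
    by have -> : k' = t by apply: val_inj.
  have := run k.+1; rewrite ltnSn lkt => /(_ isT).
  have [[dis_k _] _ _ _ _] := feas k' w.
  rewrite /a (stockS _ k') -/a; lra.
have [/andP[ed0 _] /andP[ec0 _]] := (eta_dis_range, eta_ch_range).
have ub0 : 0 < ed * ec * b by rewrite !mulr_gt0.
have ub : ed * ec * b <= b.
  by apply: ler_piMl; [exact: ltW | case/andP: round_trip_efficiency].
exists (dev_dis dis t w b), (dev_ch ch t k' w b), (dev_s s k' w b); split.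
- apply: storage_feas_dev => // [|n kn]; first exact: ltW.
  by apply: le_trans (run n kn); lra.
- by apply: dev_s_dominates => //; exact: ltW.
- by move=> t0 w0; rewrite /dev_dis /pulse; case: (_ && _); lra.
- by move=> t0 w0; rewrite /dev_ch /pulse; case: (_ && _); case: (_ && _); lra.
- by rewrite /dev_ch /pulse !eqxx /=; case: (_ && _); lra.
Qed.

End StorageFirm.

Theorem proposition1 (R : realType) (I NT NW NWG NCG : nat)
    (M : market R I NT NW NWG NCG) (Qs : 'I_I -> R) :
  market_wf M -> (forall i, 0 <= Qs i) ->
  forall p : profile R I NT NW NWG NCG, nash_equilibrium M Qs p ->
  forall (i : 'I_I) (t : 'I_NT) (w : 'I_NW),
    ~ (0 < qch p i t w /\ 0 < qdis p i t w).
Proof.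
move=> [[Delta_gt0 [Psi_gt0 _]] alpha_beta_gt0 _ _ storage_params] _ p [_ eq_storage _ _].
move=> i t w [ch_t dis_t].
have [feas opt] := eq_storage i.
have [cs_gt0 eta_ch_range eta_dis_range _ _] := storage_params i.
have [dis' [ch' [s' [feas' s_le dis_le ch_le ch_lt]]]] :=
  storage_improving_deviation Delta_gt0 eta_dis_range eta_ch_range feas dis_t ch_t.
have := opt _ _ _ feas'; rewrite storage_obj_set_storage storage_obj_value.
apply/negP; rewrite -ltNge.
exact: storage_value_lt (alpha_beta_gt0 i) cs_gt0 s_le dis_le ch_le ch_lt.
Qed.
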